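(* Let $n$ be a positive integer and let $G$ be a pure $(2n+1)$-sparse gapset of genus $g=3n+2$ with depth $q$. Then $q\le 3$. In particular, if $G$ is pseudo-symmetric, then $q=3$.
   Context: A gapset is a finite set $G\subset\mathbb{N}=\{1,2,\dots\}$ such that whenever $z\in G$ and $z=x+y$ with $x,y\in\mathbb{N}$, then $x\in G$ or $y\in G$; its genus is $g=\#G$. Writing $G=\{\ell_1<\dots<\ell_g\}$: multiplicity $m(G)=\min\{s\in\mathbb{N}:s\notin G\}$; conductor $c(G)=\min\{s\in\mathbb{N}: s+t\notin G\ \forall t\in\mathbb{N}_0\}$; Frobenius number $F(G)=c(G)-1=\ell_g$; depth $q(G)=\lceil c(G)/m(G)\rceil$. $G$ is pseudo-symmetric if $F(G)=2g-2$. $G$ is pure $\kappa$-sparse if $\ell_{i+1}-\ell_i\le\kappa$ for all $i$ with equality for some $i$. *)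

From mathcomp Require Import all_boot.
Set Implicit Arguments. Unset Strict Implicit. Unset Printing Implicit Defensive.

Definition is_gapset (G : seq nat) : Prop :=
  [/\ uniq G,
      (forall z, z \in G -> 0 < z) &
      (forall z x y, z \in G -> 0 < x -> 0 < y -> z = x + y ->
                     x \in G \/ y \in G)].

Definition genus (G : seq nat) : nat := size G.

(* conductor c(G): least s ≥ 1 with s + t ∉ G for all t ≥ 0,
   i.e. (max G) + 1, and 1 when G is empty *)
Definition conductor (G : seq nat) : nat := (\max_(x <- G) x).+1.

Definition frobenius (G : seq nat) : nat := (conductor G).-1.

Lemma mult_ex (G : seq nat) : exists s, (0 < s) && (s \notin G).
Proof.
exists (conductor G); apply/andP; split => //.
apply/negP => H.
have := @leq_bigmax_seq nat G predT (fun x => x) _ H isT.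
by rewrite /conductor ltnn.
Qed.

Definition multiplicity (G : seq nat) : nat := ex_minn (mult_ex G).

(* depth q(G) = ceil (c(G) / m(G)) *)
Definition depth (G : seq nat) : nat :=
  (conductor G + multiplicity G).-1 %/ multiplicity G.

Definition pseudo_symmetric (G : seq nat) : Prop :=
  frobenius G = 2 * genus G - 2.

Definition pure_sparse (k : nat) (G : seq nat) : Prop :=
  let l := sort leq G in
  (forall i, i.+1 < size l -> nth 0 l i.+1 - nth 0 l i <= k) /\
  (exists2 i, i.+1 < size l & nth 0 l i.+1 - nth 0 l i = k).

From mathcomp Require Import all_boot zify.

(* The non-gaps of a gapset are closed under addition, and the multiplicity m
   is the least of them.  An interval a < x < b = a + 2n + 1 of non-gaps between
   two gaps therefore forces m >= 2n + 1 (otherwise b - m and m would be non-gaps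
   adding up to the gap b), and 3m is a non-gap.  The Frobenius number of a
   gapset of genus g is at most 2g - 1 = 6n + 3, hence F < 3m, i.e. depth <= 3.
   In the pseudo-symmetric case F = 6n + 2, and depth 3 means 2m <= F: otherwise
   m >= 3n + 2 = g, so besides the m - 1 gaps below m there is room for at most
   one gap above m.  But the jump ends at a gap b > m, so b = F, and then
   a = 4n + 1 is either a second gap above m or forces m > g. *)

Lemma bigmax_seq_mem (s : seq nat) : s != [::] -> \max_(x <- s) x \in s.
Proof.
elim: s => // x [|y s] IH _; first by rewrite big_seq1 mem_seq1.
by rewrite big_cons inE /maxn; case: ltnP => _; rewrite ?IH ?orbT ?eqxx.
Qed.

Definition consecutive_gaps (G : seq nat) (a b : nat) : Prop :=
  [/\ a \in G, b \in G & forall x, a < x < b -> x \notin G].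

Lemma pure_sparse_jump (k : nat) (G : seq nat) :
  pure_sparse k G -> exists a, consecutive_gaps G a (a + k).
Proof.
case=> _ [i i_lt jump_i]; set l := sort leq G in i_lt jump_i.
have sorted_l : sorted leq l by apply: sort_sorted; exact: leq_total.
have nth_mono j j' : j < size l -> j' < size l -> j <= j' -> nth 0 l j <= nth 0 l j'.
  by move=> ? ?; apply: sorted_leq_nth => //; exact: leq_trans.
exists (nth 0 l i); split.
- by rewrite -(mem_sort leq) mem_nth // ltnW.
- by rewrite -(mem_sort leq) -jump_i subnKC ?mem_nth // nth_mono // ltnW.
move=> x /andP[ax xb]; apply/negP; rewrite -(mem_sort leq) => x_in.
have j_lt : index x l < size l by rewrite index_mem.
have := nth_mono _ i j_lt (ltnW i_lt); have := nth_mono i.+1 _ i_lt j_lt.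
rewrite nth_index //; case: (leqP (index x l) i); lia.
Qed.

Section Gapset.

Variable G : seq nat.

Local Notation m := (multiplicity G).
Local Notation F := (frobenius G).

Lemma multiplicity_gt0 : 0 < m.
Proof. by rewrite /multiplicity; case: ex_minnP => ? /andP[]. Qed.

Lemma multiplicity_notin : m \notin G.
Proof. by rewrite /multiplicity; case: ex_minnP => ? /andP[]. Qed.

Lemma mem_lt_multiplicity x : 0 < x < m -> x \in G.
Proof.
rewrite /multiplicity; case: ex_minnP => m0 _ m0_min /andP[x_gt0 x_lt].
by apply: contraTT x_lt => x_notin; rewrite -leqNgt m0_min // x_gt0.
Qed.

Lemma frobenius_mem : G != [::] -> F \in G.
Proof. exact: bigmax_seq_mem. Qed.

Lemma leq_frobenius x : x \in G -> x <= F.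
Proof. by move=> xG; rewrite /frobenius /conductor /= (leq_bigmax_seq x). Qed.

Lemma depthE : depth G = (F %/ m).+1.
Proof.
rewrite /depth /frobenius /conductor addSn /=.
by rewrite divnDr ?dvdnn // divnn multiplicity_gt0 addn1.
Qed.

Lemma depth_leqS q : (depth G <= q.+1) = (F < q.+1 * m).
Proof. by rewrite depthE ltnS -ltnS ltn_divLR ?multiplicity_gt0. Qed.

Lemma depth_geqS q : (q.+1 <= depth G) = (q * m <= F).
Proof. by rewrite depthE ltnS leq_divRL ?multiplicity_gt0. Qed.

Hypothesis gapsetG : is_gapset G.

Lemma gap_gt0 x : x \in G -> 0 < x.
Proof. by case: gapsetG => _ + _; apply. Qed.

Lemma nongapD x y : 0 < x -> 0 < y -> x \notin G -> y \notin G -> x + y \notin G.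
Proof.
move=> x_gt0 y_gt0 xG yG; apply/negP => xyG.
by case: gapsetG => _ _ /(_ _ x y xyG x_gt0 y_gt0 erefl) []; apply/negP.
Qed.

Lemma mul_multiplicity_notin k : 0 < k -> k * m \notin G.
Proof.
elim: k => // [[_ _ | k IH _]]; first by rewrite mul1n multiplicity_notin.
by rewrite mulSn addnC nongapD ?muln_gt0 ?multiplicity_gt0 ?IH ?multiplicity_notin.
Qed.

Lemma consecutive_gaps_leq_multiplicity a b :
  consecutive_gaps G a b -> a < b -> b - a <= m.
Proof.
case=> _ bG between ab; rewrite leqNgt; apply/negP => m_lt.
have m_gt0 := multiplicity_gt0.
have bm_notin : b - m \notin G by apply: between; lia.
have := @nongapD _ _ _ m_gt0 bm_notin multiplicity_notin.
by rewrite subnK ?bG //; lia.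
Qed.

Lemma multiplicity_leq_consecutive_gaps a b :
  consecutive_gaps G a b -> a.+1 < b -> m <= a.+1.
Proof.
case=> _ _ between ab; rewrite leqNgt; apply/negP => a1_lt.
by have := between a.+1; rewrite ltnSn ab mem_lt_multiplicity // => /(_ isT).
Qed.

Lemma size_gaps_above_multiplicity s :
  uniq s -> {subset s <= G} -> {in s, forall x, m <= x} -> m.-1 + size s <= genus G.
Proof.
case: gapsetG => uniqG _ _ uniq_s sG s_ge.
rewrite -[m.-1](size_iota 1) -size_cat /genus uniq_leq_size //.
  rewrite cat_uniq iota_uniq uniq_s andbT /=; apply/hasPn => x /s_ge.
  by rewrite mem_iota; lia.
move=> x; rewrite mem_cat mem_iota => /orP[x_lt | /sG //].
by rewrite mem_lt_multiplicity //; lia.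
Qed.

Lemma multiplicity_leq_genus x : x \in G -> m <= x -> m <= genus G.
Proof.
move=> xG m_le; have m_gt0 := multiplicity_gt0.
suff : m.-1 + size [:: x] <= genus G by rewrite /=; lia.
by apply: size_gaps_above_multiplicity => // z /[!inE] /eqP ->.
Qed.

Lemma multiplicity_lt_genus x y :
  x \in G -> y \in G -> x != y -> m <= x -> m <= y -> m < genus G.
Proof.
move=> xG yG xy m_le_x m_le_y; have m_gt0 := multiplicity_gt0.
suff : m.-1 + size [:: x; y] <= genus G by rewrite /=; lia.
apply: size_gaps_above_multiplicity; first by rewrite /= inE xy.
  by move=> z /[!inE] /orP[] /eqP ->.
by move=> z /[!inE] /orP[] /eqP ->.
Qed.

Lemma frobenius_leq_genus : F <= (2 * genus G).-1.
Proof.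
have [-> | G_nonempty] := eqVneq G [::]; first by rewrite /frobenius /conductor big_nil.
have FG := frobenius_mem G_nonempty; have F_gt0 := gap_gt0 _ FG.
case: gapsetG => uniqG _ splitG.
pose s := iota 1 F.-1.
have gaps_s : (count (mem G) s).+1 <= genus G.
  rewrite -size_filter /genus -[_.+1]/(size (F :: filter (mem G) s)) uniq_leq_size //.
    by rewrite /= filter_uniq ?iota_uniq // mem_filter mem_iota andbT; lia.
  by move=> y; rewrite inE mem_filter => /orP[/eqP -> | /andP[]].
(* x |-> F - x maps the non-gaps below F into the gaps below F, as F = x + (F - x). *)
have nongaps_s : count (predC (mem G)) s <= count (mem G) s.
  rewrite -!size_filter -(size_map (subn F)) uniq_leq_size //.
    rewrite map_inj_in_uniq ?filter_uniq ?iota_uniq // => x y.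
    by rewrite !mem_filter !mem_iota; lia.
  move=> _ /mapP[x + ->]; rewrite mem_filter mem_iota => /andP[/= xG x_in].
  rewrite mem_filter mem_iota; apply/andP; split; last by lia.
  by case: (splitG F x (F - x)) => //; [lia | lia | lia | rewrite (negbTE xG)].
by have := count_predC (mem G) s; rewrite size_iota; lia.
Qed.

End Gapset.

Theorem mainTheorem14 (n : nat) (G : seq nat) :
  0 < n -> is_gapset G -> pure_sparse (2 * n + 1) G -> genus G = 3 * n + 2 ->
  depth G <= 3 /\ (pseudo_symmetric G -> depth G = 3).
Proof.
move=> n_gt0 gapsetG /pure_sparse_jump[a jump] genusG.
set m := multiplicity G; set F := frobenius G; set b := a + (2 * n + 1) in jump.
have [aG bG _] := jump.
have FG : F \in G by apply/frobenius_mem/eqP => G0; move: genusG; rewrite G0 /genus /=; lia.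
have m_ge : 2 * n + 1 <= m by have := consecutive_gaps_leq_multiplicity G gapsetG _ _ jump; lia.
have F_le : F <= 6 * n + 3 by have := frobenius_leq_genus G gapsetG; lia.
have F_neq : F != 3 * m by apply: contraTneq FG => ->; exact: mul_multiplicity_notin.
have depth_le3 : depth G <= 3 by rewrite depth_leqS; lia.
split=> // pseudo_sym; rewrite /pseudo_symmetric genusG -/F in pseudo_sym.
apply/anti_leq; rewrite depth_le3 depth_geqS leqNgt; apply/negP => F_lt.
have m_le : m <= a.+1 by apply: multiplicity_leq_consecutive_gaps jump _; lia.
have b_le : b <= F := leq_frobenius G _ bG.
have [bF | bF] := eqVneq b F.
- have [a_lt | a_ge] := ltnP a m.
  + by have := multiplicity_leq_genus G gapsetG _ FG; lia.
  + by have := multiplicity_lt_genus G gapsetG _ _ aG FG; rewrite neq_ltn; lia.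
- by have := multiplicity_lt_genus G gapsetG _ _ bG FG bF; lia.
Qed.
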